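(* Let $\ell\in\mathcal{D}^-[0,\infty)$, $r\in\mathcal{D}^+[0,\infty)$ with $\inf_{t\ge0}(r(t)-\ell(t))>0$, let $c_0,c_0'\in\mathbb{R}$ and $\psi,\psi'\in\mathcal{D}[0,\infty)$ with $\psi(0)=\psi'(0)$. Suppose $(\phi,\eta)$ and $(\phi',\eta')$ solve the SP on $[\ell(\cdot),r(\cdot)]$ for $c_0+\psi$ and $c_0'+\psi'$, respectively, with corresponding constraining processes $(\eta_\ell,\eta_r)$ and $(\eta_\ell',\eta_r')$. If there exists a non-decreasing function $\nu$ with $\nu(0)=0$ such that $\psi=\psi'+\nu$, then for each $t\ge0$: (1) $\eta_\ell(t)-[c_0'-c_0]^+\le\eta_\ell'(t)\le\eta_\ell(t)+\nu(t)+[c_0-c_0']^+$; (2) $\eta_r'(t)-[c_0'-c_0]^+\le\eta_r(t)\le\eta_r'(t)+\nu(t)+[c_0-c_0']^+$.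
   Context: $\mathcal{D}[0,\infty)$ denotes the càdlàg functions $[0,\infty)\to(-\infty,\infty)$; $\mathcal{D}^-[0,\infty)$ (resp. $\mathcal{D}^+[0,\infty)$) denotes càdlàg functions with values in $[-\infty,\infty)$ (resp. $(-\infty,\infty]$); $a^+=\max\{a,0\}$. SP: $(\phi,\eta)\in\mathcal{D}[0,\infty)^2$ solves the SP on $[\ell(\cdot),r(\cdot)]$ for $\psi$ if (1) $\phi(t)=\psi(t)+\eta(t)\in[\ell(t),r(t)]$ for all $t\ge0$; (2) $\eta=\eta_\ell-\eta_r$ with $\eta_\ell,\eta_r$ non-decreasing and $\int_0^\infty \mathbb{I}_{\{\phi(s)>\ell(s)\}}\,d\eta_\ell(s)=0$, $\int_0^\infty \mathbb{I}_{\{\phi(s)<r(s)\}}\,d\eta_r(s)=0$. The pair $(\eta_\ell,\eta_r)$ is called the pair of constraining processes associated with the SP. *)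

From HB Require Import structures.
From mathcomp Require Import all_boot all_order all_algebra.
From mathcomp Require Import all_classical all_reals all_analysis.
Set Implicit Arguments. Unset Strict Implicit. Unset Printing Implicit Defensive.
Import Order.TTheory GRing.Theory Num.Theory.
Import numFieldNormedType.Exports.
Local Open Scope classical_set_scope.
Local Open Scope ring_scope.

(* càdlàg on [0,oo): right-continuous at every t >= 0, with a left limit at
   every t > 0.  T is any topological space: R (for D[0,oo)) or \bar R
   (for D^-[0,oo), D^+[0,oo)). *)
Definition cadlag {R : realType} {T : topologicalType} (f : R -> T) : Prop :=
  forall t : R, 0 <= t ->
    (f x @[x --> t^'+] --> f t) /\
    (0 < t -> exists l : T, f x @[x --> t^'-] --> l).

(* extension by 0 to (-oo,0): encodes the convention f(0-) = 0 *)
Definition ext0 {R : realType} (f : R -> R) : R -> R :=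
  fun x => if x < 0 then 0 else f x.

(* f is non-decreasing on [0,oo) (with f(0-) = 0, i.e. f(0) >= 0) *)
Definition nondecr0 {R : realType} (f : R -> R) : Prop :=
  forall s t : R, s <= t -> ext0 f s <= ext0 f t.

(* Lebesgue-Stieltjes (outer) measure d f of a set, for f non-decreasing on
   [0,oo), including the jump f(0) - f(0-) = f(0) at time 0. *)
Definition LSmeasure {R : realType} (f : R -> R) (A : set R) : \bar R :=
  @mu_ext _ (ocitv_type R) R (wlength (ext0 f)) A.

Definition in_bounds {R : realType} (lo hi : \bar R) (x : R) : Prop :=
  (lo <= x%:E)%E /\ (x%:E <= hi)%E.

(* (phi, eta) solves the SP on [l, r] for psi, with constraining pair
   (etal, etar); integrals dη over [0,oo) include the jump at 0 (η(0-)=0). *)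
Definition SP {R : realType} (l r : R -> \bar R) (psi phi eta etal etar : R -> R)
  : Prop :=
  [/\ cadlag phi /\ cadlag eta,
      (forall t, 0 <= t -> phi t = psi t + eta t /\ in_bounds (l t) (r t) (phi t)),
      (forall t, 0 <= t -> eta t = etal t - etar t),
      [/\ nondecr0 etal, nondecr0 etar, cadlag etal & cadlag etar] &
      (LSmeasure etal [set s | (0 <= s) /\ (l s < (phi s)%:E)%E] = 0%E /\
       LSmeasure etar [set s | (0 <= s) /\ ((phi s)%:E < r s)%E] = 0%E)].

From HB Require Import structures.
From mathcomp Require Import all_boot all_order all_algebra.
From mathcomp Require Import all_classical all_reals all_analysis.
From mathcomp Require Import lra.
Import Order.TTheory GRing.Theory Num.Theory.
Import numFieldNormedType.Exports.
Local Open Scope classical_set_scope.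
Local Open Scope ring_scope.

(* Compare both solutions through the identity
     phi - phi' = (c0 - c0') + nu + (etal - etal') - (etar - etar').
   The measure d etal only charges times where phi sits on the lower barrier,
   and there phi <= phi', so the identity bounds the growth of etal - etal' by
   that of etar - etar' and of the data; symmetrically for etar at the upper
   barrier.  A real induction on [0, oo) then propagates the four bounds: at a
   time s an atom of d etal (or d etar) has exactly the size of the jump, and
   just after s the positive gap r - l and right continuity keep phi off one of
   the two barriers, on which the corresponding constraining process is flat. *)

Lemma real_induction (R : realType) (P : R -> Prop) :
  (forall s, 0 <= s -> (forall u, 0 <= u -> u < s -> P u) ->
     P s /\ exists2 e, 0 < e & forall u, s < u -> u < s + e -> P u) ->
  forall t, 0 <= t -> P t.
Proof.
move=> step t t0; apply: contrapT => nPt.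
pose B := [set u | 0 <= u /\ ~ P u].
have lbB : has_lbound B by exists 0 => u [].
have below : forall u, 0 <= u -> u < inf B -> P u.
  move=> u u0 uB; apply: contrapT => nPu.
  by have := ge_inf lbB (conj u0 nPu); rewrite leNgt uB.
have Bne : B !=set0 by exists t.
have [PinfB [e e0 win]] := step _ (lb_le_inf Bne (fun u => @proj1 _ _)) below.
have [b [b0 nPb] bBe] := inf_lt Bne (ltr_pwDr e0 (lexx (inf B))).
have := ge_inf lbB (conj b0 nPb); rewrite le_eqVlt => /predU1P[eb|ltb].
  by apply: nPb; rewrite -eb.
exact/nPb/win.
Qed.

Lemma near_right_window (R : realType) (s : R) (P : R -> Prop) :
  (\forall u \near s^'+, P u) ->
  exists2 e, 0 < e & forall u, s < u -> u < s + e -> P u.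
Proof.
move=> /nbhs_ballP[e e0 he]; exists e => // u su ue; apply: he => //.
by rewrite /ball /= distrC ger0_norm ?subr_ge0 ?ltW // ltrBlDl.
Qed.

Section nondecr0.
Context {R : realType}.
Implicit Types f g : R -> R.

Lemma ext0_ge0 f u : 0 <= u -> ext0 f u = f u.
Proof. by move=> u0; rewrite /ext0 ltNge u0. Qed.

Lemma nondecr0P f :
  nondecr0 f <-> 0 <= f 0 /\ forall u v, 0 <= u -> u <= v -> f u <= f v.
Proof.
split=> [fnd|[f0 fnd] u v uv].
  split; first by have := fnd (-1) 0 (lerN10 R); rewrite /ext0 ltrN10 ltxx.
  move=> u v u0 uv; rewrite -(ext0_ge0 f _ u0) -(ext0_ge0 f _ (le_trans u0 uv)).
  exact: fnd.
rewrite /ext0; case: (ltP u 0) => u0; case: (ltP v 0) => v0 //.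
- exact: le_trans f0 (fnd _ _ (lexx 0) v0).
- by have := le_lt_trans (le_trans u0 uv) v0; rewrite ltxx.
- exact: fnd.
Qed.

Lemma nondecr0_ge0 {f u} : nondecr0 f -> 0 <= u -> 0 <= f u.
Proof.
by move=> /nondecr0P[f0 fnd] u0; apply: le_trans f0 (fnd _ _ (lexx 0) u0).
Qed.

Lemma nondecr0_le {f u v} : nondecr0 f -> 0 <= u -> u <= v -> f u <= f v.
Proof. by move=> /nondecr0P[_]; apply. Qed.

Lemma nondecr0D {f g} :
  nondecr0 f -> nondecr0 g -> nondecr0 (fun x => f x + g x).
Proof.
move=> /nondecr0P[f0 fnd] /nondecr0P[g0 gnd]; apply/nondecr0P.
split=> [|u v u0 uv]; first exact: addr_ge0.
by apply: lerD; [exact: fnd | exact: gnd].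
Qed.

Lemma nondecr0_cst {c : R} : 0 <= c -> nondecr0 (fun=> c).
Proof. by move=> c0; apply/nondecr0P. Qed.

Lemma ext0_le_of_le {f H s} : nondecr0 H -> 0 <= s ->
  (forall u, 0 <= u -> u < s -> f u <= H u) ->
  forall u, u < s -> ext0 f u <= H s.
Proof.
move=> Hnd s0 fH u us; rewrite /ext0; case: (ltP u 0) => [_|u0].
  exact: nondecr0_ge0.
exact: le_trans (fH u u0 us) (nondecr0_le Hnd u0 (ltW us)).
Qed.

Lemma ext0_right_continuous f : cadlag f -> right_continuous (ext0 f).
Proof.
move=> cf x; have [x0|x0] := ltP x 0.
  rewrite /ext0 x0; apply: cvg_near_cst; near=> y.
  by rewrite ifT //; near: y; exact: nbhs_right_lt.
rewrite ext0_ge0 //; apply: cvg_trans (cf x x0).1.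
apply: near_eq_cvg; near=> y.
rewrite ext0_ge0 // (le_trans x0) // ltW //; near: y; exact: nbhs_right_gt.
Unshelve. all: by end_near. Qed.

Definition nondecr0_cumulative {f} (fnd : nondecr0 f) (fc : cadlag f) :
  cumulative R R :=
  HB.pack (ext0 f)
    (isCumulative.Build R _ R (ext0 f) fnd (ext0_right_continuous _ fc)).

Lemma LSmeasure_itv_oc {f a b} : nondecr0 f -> cadlag f -> a <= b ->
  LSmeasure f `]a, b] = (ext0 f b - ext0 f a)%:E.
Proof.
move=> fnd fc ab; rewrite /LSmeasure.
have := measurable_mu_extE (wlength (nondecr0_cumulative fnd fc)).
by move=> /(_ _ (is_ocitv a b)) /= ->; rewrite wlength_itv_bnd.
Qed.

Lemma LSmeasure_set1_ge {f v L} : nondecr0 f ->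
  (forall u, u < v -> ext0 f u <= L) ->
  ((ext0 f v - L)%:E <= LSmeasure f [set v])%E.
Proof.
move=> fnd hL; rewrite /LSmeasure /mu_ext.
apply: le_ereal_inf_tmp => _ [A [mA cov] <-].
have [k _ Akv] := cov v erefl.
have ge0 n : (0 <= wlength (ext0 f) (A n))%E.
  by rewrite -(wlength0 (ext0 f)); apply: (le_wlength fnd); exact: sub0set.
apply: le_trans (nneseries_lim_ge k.+1 (fun n _ _ => ge0 n)).
rewrite big_nat_recr //=; apply: le_trans (leeDr _ _); last exact: sume_ge0.
move: (mA k) => /ocitvP [A0|[x x12 Ak]]; first by rewrite A0 in Akv.
rewrite Ak wlength_itv_bnd; last exact: ltW.
move: Akv; rewrite Ak /= in_itv /= => /andP[x1v vx2].
by rewrite lee_fin lerB //; [exact: fnd | exact: hL].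
Qed.

End nondecr0.

Definition LSnull {R : realType} (f : R -> R) (Q : R -> Prop) : Prop :=
  LSmeasure f [set s | 0 <= s /\ Q s] = 0%E.

Section LSnull.
Context {R : realType} {f : R -> R} {Q : R -> Prop}.
Hypotheses (fnd : nondecr0 f) (fc : cadlag f) (fQ : LSnull f Q).

Lemma LSnull_jump {s L} : 0 <= s -> Q s ->
  (forall u, u < s -> ext0 f u <= L) -> f s <= L.
Proof.
move=> s0 Qs hL.
have null_s : (LSmeasure f [set s] <= 0)%E.
  by rewrite -fQ; apply: le_mu_ext => _ ->.
have := le_trans (LSmeasure_set1_ge fnd hL) null_s.
by rewrite ext0_ge0 // lee_fin subr_le0.
Qed.

Lemma LSnull_flat {s u} : 0 <= s -> s <= u ->
  (forall w, s < w -> w <= u -> Q w) -> f u <= f s.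
Proof.
move=> s0 su hQ.
have null_su : (LSmeasure f `]s, u] <= 0)%E.
  rewrite -fQ; apply: le_mu_ext => w /=; rewrite in_itv /= => /andP[sw wu].
  by split; [exact: le_trans s0 (ltW sw) | exact: hQ].
move: null_su; rewrite LSmeasure_itv_oc // !ext0_ge0 ?(le_trans s0 su) //.
by rewrite lee_fin subr_le0.
Qed.

(* At the first time f exceeds H t, neither a jump nor an increase just after
   it can avoid being charged on Q. *)
Lemma LSnull_le {H t} : nondecr0 H -> 0 <= t ->
  (forall u, 0 <= u -> u <= t -> ~ Q u -> f u <= H u) -> f t <= H t.
Proof.
move=> Hnd t0 fH; set x := H t.
have x0 : 0 <= x := nondecr0_ge0 Hnd t0.
suff : forall u, 0 <= u -> u <= t -> f u <= x by apply; rewrite ?lexx.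
apply: (@real_induction R (fun u => u <= t -> f u <= x)) => s s0 IH.
have fsx : s <= t -> f s <= x.
  move=> st; have [Qs|nQs] := pselect (Q s).
    apply: (LSnull_jump s0 Qs); apply: (ext0_le_of_le (H := fun=> x)) => //.
    - exact: nondecr0_cst.
    - by move=> u u0 us; apply: IH u u0 us (le_trans (ltW us) st).
  exact: le_trans (fH s s0 st nQs) (nondecr0_le Hnd s0 st).
split=> //; have [ts|st] := leP t s.
  by exists 1 => // u su _ ut; have := lt_le_trans su ut; rewrite ltNge ts.
have [[w /andP[sw wt] fw]|nw] := pselect (exists2 w, s < w <= t & f w <= x).
  exists (w - s); first by rewrite subr_gt0.
  move=> u su; rewrite addrC subrK => uw _; apply: le_trans fw.
  exact: nondecr0_le fnd (le_trans s0 (ltW su)) (ltW uw).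
have xf w : s < w -> w <= t -> x < f w.
  move=> sw wt; rewrite ltNge; apply/negP => fw.
  by apply: nw; exists w; rewrite ?sw.
exfalso; have := xf t st (lexx t); rewrite ltNge => /negP; apply.
apply: le_trans (fsx (ltW st)); apply: (LSnull_flat s0 (ltW st)) => w sw wt.
apply: contrapT => nQw; have w0 := le_trans s0 (ltW sw).
have := xf w sw wt; rewrite ltNge => /negP; apply.
exact: le_trans (fH w w0 wt nQw) (nondecr0_le Hnd w0 wt).
Qed.

End LSnull.

Section comparison_window.
Context {R : realType} {fA HA fB HB : R -> R} {QA QB : R -> Prop}.
Hypotheses (fAnd : nondecr0 fA) (fAc : cadlag fA) (fAQ : LSnull fA QA).
Hypotheses (fBnd : nondecr0 fB) (fBc : cadlag fB) (fBQ : LSnull fB QB).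
Hypotheses (HAnd : nondecr0 HA) (HBnd : nondecr0 HB).
Hypothesis offQB : forall u, 0 <= u -> ~ QB u -> fB u - HB u <= fA u - HA u.

Lemma comparison_right_window {s e} : 0 <= s -> fA s <= HA s ->
  (forall u, 0 <= u -> u <= s -> fB u <= HB u) ->
  (forall u, s < u -> u < s + e -> QA u) ->
  forall u, s < u -> u < s + e -> fA u <= HA u /\ fB u <= HB u.
Proof.
move=> s0 fHAs fHB QAwin.
have fHA u : s < u -> u < s + e -> fA u <= HA u.
  move=> su ue; apply: le_trans (LSnull_flat fAnd fAc fAQ s0 (ltW su) _) _.
    by move=> w sw wu; apply: QAwin sw (le_lt_trans wu ue).
  exact: le_trans fHAs (nondecr0_le HAnd s0 (ltW su)).
move=> u su ue; split; first exact: fHA.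
apply: (LSnull_le fBnd fBc fBQ HBnd (le_trans s0 (ltW su))) => w w0 wu nQw.
have [ws|sw] := leP w s; first exact: fHB.
have := offQB _ w0 nQw; have := fHA w sw (le_lt_trans wu ue); lra.
Qed.

End comparison_window.

Section comparison.
Context {R : realType} {f1 H1 f2 H2 : R -> R} {Q1 Q2 : R -> Prop}.
Hypotheses (f1nd : nondecr0 f1) (f1c : cadlag f1) (f1Q : LSnull f1 Q1).
Hypotheses (f2nd : nondecr0 f2) (f2c : cadlag f2) (f2Q : LSnull f2 Q2).
Hypotheses (H1nd : nondecr0 H1) (H2nd : nondecr0 H2).
Hypothesis offQ1 : forall u, 0 <= u -> ~ Q1 u -> f1 u - H1 u <= f2 u - H2 u.
Hypothesis offQ2 : forall u, 0 <= u -> ~ Q2 u -> f2 u - H2 u <= f1 u - H1 u.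
Hypothesis Q12 : forall u, 0 <= u -> Q1 u \/ Q2 u.
Hypothesis right_window : forall s, 0 <= s -> exists2 e, 0 < e &
  (forall u, s < u -> u < s + e -> Q1 u) \/
  (forall u, s < u -> u < s + e -> Q2 u).

Lemma comparison_principle : forall t, 0 <= t -> f1 t <= H1 t /\ f2 t <= H2 t.
Proof.
apply: real_induction => s s0 IH.
have jump1 : Q1 s -> f1 s <= H1 s.
  move=> Q1s; apply: (LSnull_jump f1nd f1Q s0 Q1s (ext0_le_of_le H1nd s0 _)).
  by move=> u u0 us; case: (IH u u0 us).
have jump2 : Q2 s -> f2 s <= H2 s.
  move=> Q2s; apply: (LSnull_jump f2nd f2Q s0 Q2s (ext0_le_of_le H2nd s0 _)).
  by move=> u u0 us; case: (IH u u0 us).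
have fHs : f1 s <= H1 s /\ f2 s <= H2 s.
  have [Q1s|Q2s] := Q12 _ s0.
    have := jump1 Q1s; have [/jump2|/(offQ2 _ s0)] := pselect (Q2 s); lra.
  have := jump2 Q2s; have [/jump1|/(offQ1 _ s0)] := pselect (Q1 s); lra.
have fH u : 0 <= u -> u <= s -> f1 u <= H1 u /\ f2 u <= H2 u.
  by move=> u0; rewrite le_eqVlt => /predU1P[->//|]; exact: IH.
have fH1 u u0 us := (fH u u0 us).1; have fH2 u u0 us := (fH u u0 us).2.
split=> //; have [e e0 [win1|win2]] := right_window _ s0.
  exists e => // u su ue.
  exact: (comparison_right_window f1nd f1c f1Q f2nd f2c f2Q H1nd H2nd offQ2
    s0 fHs.1 fH2 win1 _ su ue).
exists e => // u su ue.
by have [] := comparison_right_window f2nd f2c f2Q f1nd f1c f1Q H2nd H1nd offQ1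
  s0 fHs.2 fH1 win2 _ su ue.
Qed.

End comparison.

Section barrier.
Context {R : realType}.

Lemma cvge_lt_near {T} {F : set_system T} {FF : Filter F} (f : T -> \bar R)
    (y b : \bar R) :
  f @ F --> y -> (y < b)%E -> \forall x \near F, (f x < b)%E.
Proof.
move=> fy yb; apply: (fy [set z | (z < b)%E]).
by apply: open_nbhs_nbhs; split=> //; exact: open_ereal_lt_ereal.
Qed.

Lemma cvge_gt_near {T} {F : set_system T} {FF : Filter F} (f : T -> \bar R)
    (y b : \bar R) :
  f @ F --> y -> (b < y)%E -> \forall x \near F, (b < f x)%E.
Proof.
move=> fy yb; apply: (fy [set z | (b < z)%E]).
by apply: open_nbhs_nbhs; split=> //; exact: open_ereal_gt_ereal.
Qed.

Lemma gap_le_addr {lo hi : \bar R} {delta p : R} :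
  lo != +oo%E -> hi != -oo%E -> (delta%:E <= hi - lo)%E ->
  (p%:E <= lo)%E -> ((p + delta)%:E <= hi)%E.
Proof.
case: lo => [x| |] //; case: hi => [y| |] // _ _; rewrite ?leey //.
by rewrite -EFinB !lee_fin; lra.
Qed.

Lemma gap_right_window (l r : R -> \bar R) (phi : R -> R) (delta s : R) :
  cadlag l -> cadlag r -> cadlag phi -> 0 < delta -> 0 <= s ->
  l s != +oo%E -> r s != -oo%E -> (delta%:E <= r s - l s)%E ->
  exists2 e, 0 < e &
    (forall u, s < u -> u < s + e -> (l u < (phi u)%:E)%E) \/
    (forall u, s < u -> u < s + e -> ((phi u)%:E < r u)%E).
Proof.
move=> cl cr cphi d0 s0 ls rs gap_s.
have phi_s := (cphi s s0).1; have l_s := (cl s s0).1; have r_s := (cr s s0).1.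
have [l_low|l_high] := ltP (l s) ((phi s - delta / 2)%:E).
  have [e e0 win] : exists2 e, 0 < e &
      forall u, s < u -> u < s + e -> (l u < (phi u)%:E)%E.
    apply: near_right_window; near=> u.
    apply: (@lt_trans _ _ (phi s - delta / 2)%:E).
      by near: u; exact: cvge_lt_near l_s l_low.
    rewrite lte_fin; near: u; apply: (cvgr_gt _ phi_s); lra.
  by exists e => //; left.
have r_high : ((phi s + delta / 4)%:E < r s)%E.
  apply: (lt_le_trans _ (gap_le_addr ls rs gap_s l_high)); rewrite lte_fin; lra.
have [e e0 win] : exists2 e, 0 < e &
    forall u, s < u -> u < s + e -> ((phi u)%:E < r u)%E.
  apply: near_right_window; near=> u.
  apply: (@lt_trans _ _ (phi s + delta / 4)%:E).
    rewrite lte_fin; near: u; apply: (cvgr_lt _ phi_s); lra.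
  by near: u; exact: cvge_gt_near r_s r_high.
by exists e => //; right.
Unshelve. all: by end_near. Qed.

End barrier.

Lemma SP_constraining_le {R : realType} {l r : R -> \bar R}
    {psi psi' phi eta etal etar phi' eta' etal' etar' a b : R -> R} :
  cadlag l -> (forall t, 0 <= t -> l t != +oo%E) ->
  cadlag r -> (forall t, 0 <= t -> r t != -oo%E) ->
  (exists2 delta : R, 0 < delta &
     forall t, 0 <= t -> (delta%:E <= r t - l t)%E) ->
  SP l r psi phi eta etal etar -> SP l r psi' phi' eta' etal' etar' ->
  nondecr0 a -> nondecr0 b ->
  (forall t, 0 <= t ->
     phi t - phi' t = a t - b t + (etal t - etal' t) - (etar t - etar' t)) ->
  forall t, 0 <= t -> etal t <= etal' t + b t /\ etar t <= etar' t + a t.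
Proof.
move=> cl lfin cr rfin [delta d0 gap] [[cphi _] _ _ [lnd rnd lc rc] [lQ rQ]].
move=> [_ hphi' _ [lnd' rnd' _ _] _] a_nd b_nd phi_diff.
apply: (comparison_principle (Q1 := fun s => (l s < (phi s)%:E)%E)
  (Q2 := fun s => ((phi s)%:E < r s)%E) lnd lc lQ rnd rc rQ
  (nondecr0D lnd' b_nd) (nondecr0D rnd' a_nd))
  => [u u0 /negP|u u0 /negP|u u0|s s0].
- rewrite -leNgt => phi_l; have [l_phi' _] := (hphi' u u0).2.
  have := le_trans phi_l l_phi'; rewrite lee_fin.
  by have := phi_diff u u0; lra.
- rewrite -leNgt => r_phi; have [_ phi'_r] := (hphi' u u0).2.
  have := le_trans phi'_r r_phi; rewrite lee_fin.
  by have := phi_diff u u0; lra.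
- have [l_phi|phi_l] := ltP (l u) (phi u)%:E; [by left | right].
  have := gap_le_addr (lfin u u0) (rfin u u0) (gap u u0) phi_l.
  apply: lt_le_trans.
  by rewrite lte_fin ltrDl.
- exact: gap_right_window cl cr cphi d0 s0 (lfin s s0) (rfin s s0) (gap s s0).
Qed.

Theorem proposition3p5 (R : realType) (l r : R -> \bar R)
  (c0 c0' : R) (psi psi' phi eta etal etar phi' eta' etal' etar' nu : R -> R) :
  cadlag l -> (forall t, 0 <= t -> l t != +oo%E) ->
  cadlag r -> (forall t, 0 <= t -> r t != -oo%E) ->
  (exists2 delta : R, 0 < delta &
     forall t, 0 <= t -> (delta%:E <= r t - l t)%E) ->
  cadlag psi -> cadlag psi' -> psi 0 = psi' 0 ->
  SP l r (fun t => c0 + psi t) phi eta etal etar ->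
  SP l r (fun t => c0' + psi' t) phi' eta' etal' etar' ->
  (forall s t, 0 <= s -> s <= t -> nu s <= nu t) -> nu 0 = 0 ->
  (forall t, 0 <= t -> psi t = psi' t + nu t) ->
  forall t, 0 <= t ->
    (etal t - Num.max (c0' - c0) 0 <= etal' t /\
     etal' t <= etal t + nu t + Num.max (c0 - c0') 0) /\
    (etar' t - Num.max (c0' - c0) 0 <= etar t /\
     etar t <= etar' t + nu t + Num.max (c0 - c0') 0).
Proof.
move=> cl lfin cr rfin gap _ _ _ SP1 SP2 nund nu0 psi_nu t t0.
set b := Num.max (c0' - c0) 0; set b' := Num.max (c0 - c0') 0.
have bb' : b - b' = c0' - c0.
  by rewrite /b /b' !maxEle; case: leP => ?; case: leP => ?; lra.
have b0 : 0 <= b by rewrite le_max lexx orbT.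
have b'0 : 0 <= b' by rewrite le_max lexx orbT.
have nund0 : nondecr0 nu by apply/nondecr0P; rewrite nu0 lexx.
have nub'nd := nondecr0D nund0 (nondecr0_cst b'0).
have [[_ phi_eq eta_eq _ _] [_ phi'_eq eta'_eq _ _]] := (SP1, SP2).
have diff u : 0 <= u -> phi u - phi' u =
    (nu u + b') - b + (etal u - etal' u) - (etar u - etar' u).
  move=> u0; rewrite (phi_eq u u0).1 (phi'_eq u u0).1 eta_eq // eta'_eq //.
  by rewrite psi_nu //; lra.
have diff' u : 0 <= u -> phi' u - phi u =
    b - (nu u + b') + (etal' u - etal u) - (etar' u - etar u).
  by move=> u0; rewrite -opprB diff //; lra.
have [le_l le_r] := SP_constraining_le cl lfin cr rfin gap SP1 SP2
  nub'nd (nondecr0_cst b0) diff t t0.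
have [le_l' le_r'] := SP_constraining_le cl lfin cr rfin gap SP2 SP1
  (nondecr0_cst b0) nub'nd diff' t t0.
by split; split; lra.
Qed.
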